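(* Let $A=\{A_n\}_{n\ge0}$ be a finitely supported complex sequence with $A_0=0$, not identically zero, and put $a_n=(A_n-A_{n-1})/n$ for $n\ge1$ (so $A_n=\sum_{k=1}^n k a_k$). Then $$\sum_{n=1}^\infty\frac{|A_n|^2}{n(n+1)^2}<\sum_{n=1}^\infty\frac{|A_n|^2}{n^2(n+1)}\le\sum_{n=1}^\infty n|a_n|^2 .$$ *)

(* complex numbers are `R[i]` (mathcomp-real-closed `complex`)
   over an arbitrary `R : realType`; for R the real numbers this is C. *)
From mathcomp Require Import all_boot all_order all_algebra.
From mathcomp Require Import complex reals.
Set Implicit Arguments. Unset Strict Implicit. Unset Printing Implicit Defensive.
Import Order.TTheory GRing.Theory Num.Theory.
Local Open Scope ring_scope.

Definition adiff (R : realType) (A : nat -> R[i]) (n : nat) : R[i] :=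
  (A n - A n.-1) / n%:R.

From mathcomp Require Import all_boot all_order all_algebra.
From mathcomp Require Import complex reals.
From mathcomp Require Import ring zify.
Import Order.TTheory GRing.Theory Num.Theory.
Local Open Scope ring_scope.

(* The first inequality holds termwise, strictly at every n with A_n <> 0, since
   n^2 (n+1) < n (n+1)^2.  For the second, put P_n = |A_n|^2 / (n (n+1)).  Using
   |A_n| - |A_{n-1}| <= |A_n - A_{n-1}| = n |a_n| and completing a square gives
     |A_n|^2 / (n^2 (n+1)) + P_n - P_{n-1} <= n |a_n|^2,
   and summing telescopes the potential to P_{N+1} - P_0 = P_{N+1} >= 0. *)

Section SumBounds.
Variable F : numDomainType.

Lemma ltr_sum_nat_witness (m n j : nat) (f g : nat -> F) :
  (m <= j < n)%N -> f j < g j -> (forall i, (m <= i < n)%N -> f i <= g i) ->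
  \sum_(m <= i < n) f i < \sum_(m <= i < n) g i.
Proof.
move=> jmn ltj le_fg; have jr : j \in index_iota m n by rewrite mem_index_iota.
rewrite !(bigD1_seq j jr (iota_uniq _ _)) ltr_leD //.
rewrite big_seq_cond [leRHS]big_seq_cond.
by apply: ler_sum => i /andP[]; rewrite mem_index_iota => /le_fg.
Qed.

End SumBounds.

Section Weights.
Variable F : numFieldType.

Lemma ltr_hardy_weights (n : nat) (c : F) : (0 < n)%N -> 0 < c ->
  c / (n%:R * n.+1%:R ^+ 2) < c / (n%:R ^+ 2 * n.+1%:R).
Proof.
move=> n_gt0 c_gt0.
rewrite ltr_pM2l // -!natrX -!natrM ltf_pV2 ?posrE ?ltr0n ?muln_gt0 ?expn_gt0 ?n_gt0 //.
rewrite ltr_nat; nia.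
Qed.

Lemma ler_hardy_weights (n : nat) (c : F) : (0 < n)%N -> 0 <= c ->
  c / (n%:R * n.+1%:R ^+ 2) <= c / (n%:R ^+ 2 * n.+1%:R).
Proof.
rewrite le_eqVlt => n_gt0 /predU1P[<-|c_gt0]; first by rewrite !mul0r.
exact/ltW/ltr_hardy_weights.
Qed.

End Weights.

Section Hardy.
Variable F : numFieldType.

Lemma hardy_step (m : nat) (x y : F) : (0 < m)%N ->
  `|x| ^+ 2 / (m.+1%:R ^+ 2 * m.+2%:R)
    <= m.+1%:R * (`|x - y| / m.+1%:R) ^+ 2
       - (`|x| ^+ 2 / (m.+1%:R * m.+2%:R) - `|y| ^+ 2 / (m%:R * m.+1%:R)).
Proof.
move=> m_gt0; rewrite -subr_ge0 -!natr1.
set k := m%:R; set a := `|x|; set b := `|y|; set d := `|x - y|.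
have k_gt0 : 0 < k by rewrite ltr0n.
have k1_gt0 : 0 < k + 1 by rewrite natr1 ltr0n.
have k2_neq0 : k + 1 + 1 != 0 by rewrite !natr1 pnatr_eq0.
have dist_sqr : (a - b) ^+ 2 <= d ^+ 2.
  by rewrite -real_normK ?rpredB ?normr_real // ler_sqr ?nnegrE ?normr_ge0 ?ler_dist_dist.
have -> : (k + 1) * (d / (k + 1)) ^+ 2
    - (a ^+ 2 / ((k + 1) * (k + 1 + 1)) - b ^+ 2 / (k * (k + 1)))
    - a ^+ 2 / ((k + 1) ^+ 2 * (k + 1 + 1))
  = ((k * a - (k + 1) * b) ^+ 2 + k * (k + 1) * (d ^+ 2 - (a - b) ^+ 2))
    / (k * (k + 1) ^+ 2).
  by field; rewrite k2_neq0 !gt_eqF.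
apply: divr_ge0; last by rewrite mulr_ge0 ?exprn_ge0 ?ltW.
apply: addr_ge0; last by rewrite mulr_ge0 ?subr_ge0 // ltW // mulr_gt0.
by apply: real_exprn_even_ge0; rewrite // rpredB // rpredM ?normr_real ?gtr0_real.
Qed.

Definition hardy_potential (A : nat -> F) (n : nat) : F :=
  `|A n| ^+ 2 / (n%:R * n.+1%:R).

(* The junk value [0^-1 = 0] makes the potential vanish at [n = 0]. *)
Lemma hardy_potential0 (A : nat -> F) : hardy_potential A 0 = 0.
Proof. by rewrite /hardy_potential mul0r invr0 mulr0. Qed.

Lemma hardy_term (A : nat -> F) (n : nat) : A 0%N = 0 -> (0 < n)%N ->
  `|A n| ^+ 2 / (n%:R ^+ 2 * n.+1%:R)
    <= n%:R * `|(A n - A n.-1) / n%:R| ^+ 2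
       - (hardy_potential A n - hardy_potential A n.-1).
Proof.
move=> A0 n_gt0; rewrite normrM normfV normr_nat.
case: n n_gt0 => [|[|m]] // _; last exact: hardy_step.
rewrite /= hardy_potential0 /hardy_potential A0 subr0 le_eqVlt; apply/predU1P; left.
by field.
Qed.

Lemma hardy_sum (A : nat -> F) (N : nat) : A 0%N = 0 ->
  \sum_(1 <= n < N.+2) `|A n| ^+ 2 / (n%:R ^+ 2 * n.+1%:R)
    <= \sum_(1 <= n < N.+2) n%:R * `|(A n - A n.-1) / n%:R| ^+ 2.
Proof.
move=> A0; apply: le_trans.
  by apply: ler_sum_nat => n /andP[n_gt0 _]; apply: hardy_term.
rewrite sumrB lerBlDr lerDl big_add1 /= telescope_sumr // hardy_potential0 subr0.
by rewrite divr_ge0 ?exprn_ge0 ?mulr_ge0.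
Qed.

End Hardy.

Theorem corollary2p2 (R : realType) (A : nat -> R[i]) (N : nat) :
  (forall n : nat, (N < n)%N -> A n = 0) ->
  A 0%N = 0 ->
  (exists n : nat, A n != 0) ->
  \sum_(1 <= n < N.+2) `|A n| ^+ 2 / (n%:R * (n.+1)%:R ^+ 2)
    < \sum_(1 <= n < N.+2) `|A n| ^+ 2 / (n%:R ^+ 2 * (n.+1)%:R)
  /\
  \sum_(1 <= n < N.+2) `|A n| ^+ 2 / (n%:R ^+ 2 * (n.+1)%:R)
    <= \sum_(1 <= n < N.+2) n%:R * `|adiff A n| ^+ 2.
Proof.
move=> A_supp A0 [j Aj_neq0].
have j_gt0 : (0 < j)%N by rewrite lt0n; apply: contraNneq Aj_neq0 => ->; rewrite A0.
have j_le : (j <= N)%N by rewrite leqNgt; apply: contra Aj_neq0 => /A_supp ->.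
split; last exact: hardy_sum.
apply: (@ltr_sum_nat_witness _ _ _ j).
- by rewrite j_gt0 ltnS (leq_trans j_le).
- by rewrite ltr_hardy_weights // exprn_gt0 ?normr_gt0.
- by move=> n /andP[n_gt0 _]; rewrite ler_hardy_weights ?exprn_ge0.
Qed.
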